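(* Consider the system, with state $(s,e,v,q,c)$ in $\Omega=\{(s,e,v,q,c)\in\mathbb{R}_+^5: q\ge q_{\min}\}$, $$\dot s=-\tfrac1\gamma\varphi(s)e+d(s_{\rm in}-s),\quad \dot e=(1-\alpha)\varphi(s)e-de,\quad \dot v=\alpha\beta\varphi(s)e-\rho(v)c-dv,$$ $$\dot q=\rho(v)-\mu(q)q,\quad \dot c=\mu(q)c-dc,$$ with constant controls $\alpha\in(0,1)$ and $d>0$. Then the system has an equilibrium in $\Omega$ with $e>0$ and $c>0$ if and only if $d<\min\{(1-\alpha)\varphi_{\max},\psi_{\max}\}$ and $$\varphi^{-1}\!\left(\frac{d}{1-\alpha}\right)+\frac{\psi^{-1}(d)}{\alpha\beta\gamma}<s_{\rm in}.$$ In that case this equilibrium is unique and equals $(s^*,e^*,v^*,q^*,c^* )$ with $s^*=\varphi^{-1}(d/(1-\alpha))$, $e^*=(1-\alpha)\gamma(s_{\rm in}-s^* )$, $v^*=\psi^{-1}(d)$, $q^*=\mu^{-1}(d)$, $c^*=(v_{\rm in}^*-v^* )/q^*$ where $v_{\rm in}^*=\alpha\beta\gamma(s_{\rm in}-s^* )$.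
   Context: All parameters $s_{\rm in},\gamma,\beta,\varphi_{\max},k_s,\rho_{\max},k_v,q_{\min},\mu_{\max}$ are strictly positive. $\varphi(s)=\frac{\varphi_{\max}s}{k_s+s}$, $\rho(v)=\frac{\rho_{\max}v}{k_v+v}$ on $[0,\infty)$, $\mu(q)=\mu_{\max}(1-q_{\min}/q)$ on $[q_{\min},\infty)$. Inverses $\varphi^{-1}:[0,\varphi_{\max})\to[0,\infty)$, $\mu^{-1}:[0,\mu_{\max})\to[q_{\min},\infty)$, $\rho^{-1}:[0,\rho_{\max})\to[0,\infty)$. $\psi_{\max}=\frac{\mu_{\max}\rho_{\max}}{\rho_{\max}+q_{\min}\mu_{\max}}$ and $\psi^{-1}(y)=\rho^{-1}(y\,\mu^{-1}(y))$ for $y\in[0,\psi_{\max})$. *)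

From Stdlib Require Import Reals Lra.
Open Scope R_scope.

Definition phi (phimax ks s : R) : R := phimax * s / (ks + s).
Definition rho (rhomax kv v : R) : R := rhomax * v / (kv + v).
Definition mu (mumax qmin q : R) : R := mumax * (1 - qmin / q).

(* Their inverses (closed forms), on [0,phimax), [0,rhomax), [0,mumax). *)
Definition phi_inv (phimax ks y : R) : R := ks * y / (phimax - y).
Definition rho_inv (rhomax kv y : R) : R := kv * y / (rhomax - y).
Definition mu_inv (mumax qmin y : R) : R := qmin * mumax / (mumax - y).

Definition psi_max (mumax rhomax qmin : R) : R :=
  mumax * rhomax / (rhomax + qmin * mumax).
Definition psi_inv (mumax rhomax kv qmin y : R) : R :=
  rho_inv rhomax kv (y * mu_inv mumax qmin y).

Lemma phi_phi_inv phimax ks y :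
  0 < phimax -> 0 < ks -> 0 <= y < phimax ->
  0 <= phi_inv phimax ks y /\ phi phimax ks (phi_inv phimax ks y) = y.
Proof.
  intros Hp Hk Hy. unfold phi, phi_inv. split.
  - apply Rmult_le_pos; [nra|]. left; apply Rinv_0_lt_compat; lra.
  - field. split; [lra|]. nra.
Qed.

Lemma mu_mu_inv mumax qmin y :
  0 < mumax -> 0 < qmin -> 0 <= y < mumax ->
  qmin <= mu_inv mumax qmin y /\ mu mumax qmin (mu_inv mumax qmin y) = y.
Proof.
  intros Hm Hq Hy. unfold mu, mu_inv. split.
  - apply (Rmult_le_reg_r (mumax - y)); [lra|].
    unfold Rdiv. rewrite Rmult_assoc, Rinv_l by lra. nra.
  - field. split; lra.
Qed.

Section Model.
Variables (sin gamma beta phimax ks rhomax kv qmin mumax alpha d : R).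

Definition f_s s e := - / gamma * phi phimax ks s * e + d * (sin - s).
Definition f_e s e := (1 - alpha) * phi phimax ks s * e - d * e.
Definition f_v s e v c :=
  alpha * beta * phi phimax ks s * e - rho rhomax kv v * c - d * v.
Definition f_q v q := rho rhomax kv v - mu mumax qmin q * q.
Definition f_c q c := mu mumax qmin q * c - d * c.

Definition in_Omega s e v q c :=
  0 <= s /\ 0 <= e /\ 0 <= v /\ 0 <= q /\ 0 <= c /\ qmin <= q.

Definition is_equilibrium s e v q c :=
  in_Omega s e v q c /\
  f_s s e = 0 /\ f_e s e = 0 /\ f_v s e v c = 0 /\ f_q v q = 0 /\ f_c q c = 0.
End Model.

From Stdlib Require Import Reals Lra.
From Coquelicot Require Import Rcomplements.
Open Scope R_scope.

(* At an equilibrium with e > 0 and c > 0 the equations for e, c and q fix the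
   three uptake rates: phi(s) = d/(1-alpha), mu(q) = d and rho(v) = d q.
   Inverting the Michaelis-Menten and Droop laws then determines s, q and
   v = rho^{-1}(d mu^{-1}(d)) = psi^{-1}(d); the equations for s and v are
   linear in e and c, and c > 0 is exactly the strict inequality of the
   statement.  Conversely these formulas define an equilibrium in Omega. *)

Lemma phi_eq_inv pm k s y :
  0 < pm -> 0 < k -> 0 <= s -> phi pm k s = y -> y < pm /\ s = phi_inv pm k y.
Proof.
  unfold phi, phi_inv; intros Hpm Hk Hs <-.
  assert (Hlt : pm * s / (k + s) < pm) by (apply Rlt_div_l; nra).
  split; [exact Hlt|].
  field; repeat split; nra.
Qed.

Lemma rho_eq_inv rm k v y :
  0 < rm -> 0 < k -> 0 <= v -> rho rm k v = y -> y < rm /\ v = rho_inv rm k y.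
Proof. exact (phi_eq_inv rm k v y). Qed.

Lemma rho_rho_inv rm k y :
  0 < rm -> 0 < k -> 0 <= y < rm ->
  0 <= rho_inv rm k y /\ rho rm k (rho_inv rm k y) = y.
Proof. exact (phi_phi_inv rm k y). Qed.

Lemma mu_eq_inv mm qm q y :
  0 < mm -> 0 < qm -> qm <= q -> mu mm qm q = y -> y < mm /\ q = mu_inv mm qm y.
Proof.
  unfold mu, mu_inv; intros Hmm Hqm Hq <-.
  assert (Hpos : 0 < qm / q) by (apply Rdiv_lt_0_compat; lra).
  split; [nra|].
  field; repeat split; nra.
Qed.

Lemma lt_psi_max_iff mumax rhomax qmin d :
  0 < mumax -> 0 < rhomax -> 0 < qmin -> 0 <= d ->
  (d < mumax /\ d * mu_inv mumax qmin d < rhomax <-> d < psi_max mumax rhomax qmin).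
Proof.
  unfold mu_inv, psi_max; intros Hmm Hrm Hqm Hd.
  rewrite <- Rlt_div_r by nra.
  split.
  - intros [Hdm Hlt].
    replace (d * (qmin * mumax / (mumax - d))) with (d * qmin * mumax / (mumax - d))
      in Hlt by (field; lra).
    apply Rlt_div_l in Hlt; lra.
  - intros Hlt.
    assert (Hdm : d < mumax) by (assert (0 < qmin * mumax) by nra; nra).
    split; [exact Hdm|].
    replace (d * (qmin * mumax / (mumax - d))) with (d * qmin * mumax / (mumax - d))
      by (field; lra).
    apply Rlt_div_l; lra.
Qed.

Section PositiveEquilibrium.

Context {sin gamma beta phimax ks rhomax kv qmin mumax alpha d : R}.
Hypotheses (Hgamma : 0 < gamma) (Hbeta : 0 < beta)
  (Hphimax : 0 < phimax) (Hks : 0 < ks) (Hrhomax : 0 < rhomax)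
  (Hkv : 0 < kv) (Hqmin : 0 < qmin) (Hmumax : 0 < mumax)
  (Halpha : 0 < alpha < 1) (Hd : 0 < d).

Local Notation equilibrium :=
  (is_equilibrium sin gamma beta phimax ks rhomax kv qmin mumax alpha d).
Local Notation s_star := (phi_inv phimax ks (d / (1 - alpha))).
Local Notation v_star := (psi_inv mumax rhomax kv qmin d).
Local Notation q_star := (mu_inv mumax qmin d).
Local Notation e_star := ((1 - alpha) * gamma * (sin - s_star)).
Local Notation c_star := ((alpha * beta * gamma * (sin - s_star) - v_star) / q_star).
Local Notation admissible :=
  ((d / (1 - alpha) < phimax /\ d < psi_max mumax rhomax qmin) /\
   v_star < alpha * beta * gamma * (sin - s_star)).

Lemma positive_equilibrium_rates s e v q c :
  equilibrium s e v q c -> 0 < e -> 0 < c ->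
  phi phimax ks s = d / (1 - alpha) /\ mu mumax qmin q = d /\
  rho rhomax kv v = d * q.
Proof using Halpha.
  intros [_ [_ [Fe [_ [Fq Fc]]]]] He Hc; unfold f_e, f_q, f_c in *.
  assert (HM : mu mumax qmin q = d) by (apply (Rmult_eq_reg_r c); lra).
  rewrite HM in Fq.
  split; [|split; lra].
  apply (Rmult_eq_reg_r ((1 - alpha) * e)); [|nra].
  replace (d / (1 - alpha) * ((1 - alpha) * e)) with (d * e) by (field; lra).
  lra.
Qed.

Lemma positive_equilibrium_values s e v q c :
  equilibrium s e v q c -> 0 < e -> 0 < c ->
  admissible /\
  (s = s_star /\ e = e_star /\ v = v_star /\ q = q_star /\ c = c_star).
Proof using Hgamma Hphimax Hks Hrhomax Hkv Hqmin Hmumax Halpha Hd.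
  intros Heq He Hc.
  destruct (positive_equilibrium_rates _ _ _ _ _ Heq He Hc) as [HP [HM HR]].
  destruct Heq as [[Hs [_ [Hv [_ [_ Hq]]]]] [Fs [_ [Fv _]]]].
  unfold f_s, f_v in Fs, Fv.
  destruct (phi_eq_inv _ _ _ _ Hphimax Hks Hs HP) as [Hphi_lt ->].
  destruct (mu_eq_inv _ _ _ _ Hmumax Hqmin Hq HM) as [Hmu_lt ->].
  destruct (rho_eq_inv _ _ _ _ Hrhomax Hkv Hv HR) as [Hrho_lt Hv_eq].
  change (v = v_star) in Hv_eq; subst v.
  assert (Hpsi : d < psi_max mumax rhomax qmin)
    by (apply lt_psi_max_iff; auto; lra).
  assert (He_eq : e = e_star).
  { rewrite HP in Fs.
    apply (Rmult_eq_reg_l (/ gamma * (d / (1 - alpha)))).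
    - transitivity (d * (sin - s_star)); [lra | field; lra].
    - apply Rgt_not_eq, Rmult_lt_0_compat;
        [apply Rinv_0_lt_compat | apply Rdiv_lt_0_compat]; lra. }
  assert (Hcq : c * q_star = alpha * beta * gamma * (sin - s_star) - v_star).
  { rewrite HP, HR, He_eq in Fv.
    apply (Rmult_eq_reg_l d); [|lra].
    replace (alpha * beta * (d / (1 - alpha)) * e_star)
      with (d * (alpha * beta * gamma * (sin - s_star))) in Fv by (field; lra).
    lra. }
  assert (Hq_pos : 0 < q_star) by lra.
  split; [split; [auto | nra]|].
  repeat split; auto.
  apply (Rmult_eq_reg_r q_star); [|lra].
  rewrite Hcq; field; lra.
Qed.

Lemma admissible_positive_equilibrium :
  admissible -> equilibrium s_star e_star v_star q_star c_star /\
                0 < e_star /\ 0 < c_star.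
Proof using Hgamma Hbeta Hphimax Hks Hrhomax Hkv Hqmin Hmumax Halpha Hd.
  intros [[Hphi_lt Hpsi] Hv_lt].
  destruct (proj2 (lt_psi_max_iff _ _ _ _ Hmumax Hrhomax Hqmin (Rlt_le _ _ Hd)) Hpsi)
    as [Hmu_lt Hrho_lt].
  destruct (phi_phi_inv phimax ks (d / (1 - alpha))) as [Hs Hphi];
    [auto | auto | split; [apply Rlt_le, Rdiv_lt_0_compat|]; lra |].
  destruct (mu_mu_inv mumax qmin d) as [Hq Hmu]; [auto | auto | lra |].
  destruct (rho_rho_inv rhomax kv (d * q_star)) as [Hv Hrho]; [auto | auto | nra |].
  change (0 <= v_star) in Hv; change (rho rhomax kv v_star = d * q_star) in Hrho.
  assert (Habg : 0 < alpha * beta * gamma) by (apply Rmult_lt_0_compat; nra).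
  assert (Hsin_s : 0 < sin - s_star) by nra.
  assert (Hc : 0 < c_star) by (apply Rdiv_lt_0_compat; lra).
  assert (He : 0 < e_star)
    by (apply Rmult_lt_0_compat; [apply Rmult_lt_0_compat|]; lra).
  split; [|split; assumption].
  unfold is_equilibrium, in_Omega, f_s, f_e, f_v, f_q, f_c.
  rewrite Hphi, Hrho, Hmu.
  repeat split; try lra; field; lra.
Qed.

Lemma admissible_iff :
  (d < Rmin ((1 - alpha) * phimax) (psi_max mumax rhomax qmin) /\
   s_star + v_star / (alpha * beta * gamma) < sin) <-> admissible.
Proof using Hgamma Hbeta Halpha.
  assert (Habg : 0 < alpha * beta * gamma) by (apply Rmult_lt_0_compat; nra).
  split.
  - intros [Hmin Hineq].
    pose proof (Rmin_l ((1 - alpha) * phimax) (psi_max mumax rhomax qmin)).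
    pose proof (Rmin_r ((1 - alpha) * phimax) (psi_max mumax rhomax qmin)).
    split; [split|].
    + apply Rlt_div_l; lra.
    + lra.
    + rewrite (Rmult_comm (alpha * beta * gamma)).
      apply (Rlt_div_l v_star _ _ Habg); lra.
  - intros [[Hphi Hpsi] Hv]; split.
    + apply Rlt_div_l in Hphi; [|lra].
      apply Rmin_glb_lt; lra.
    + rewrite (Rmult_comm (alpha * beta * gamma)) in Hv.
      apply (Rlt_div_l v_star _ _ Habg) in Hv; lra.
Qed.

End PositiveEquilibrium.

Theorem mainTheorem2
  (sin gamma beta phimax ks rhomax kv qmin mumax alpha d : R)
  (Hsin : 0 < sin) (Hgamma : 0 < gamma) (Hbeta : 0 < beta)
  (Hphimax : 0 < phimax) (Hks : 0 < ks) (Hrhomax : 0 < rhomax)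
  (Hkv : 0 < kv) (Hqmin : 0 < qmin) (Hmumax : 0 < mumax)
  (Halpha : 0 < alpha < 1) (Hd : 0 < d) :
  ((exists s e v q c,
       is_equilibrium sin gamma beta phimax ks rhomax kv qmin mumax alpha d
         s e v q c /\ 0 < e /\ 0 < c)
   <->
   (d < Rmin ((1 - alpha) * phimax) (psi_max mumax rhomax qmin) /\
    phi_inv phimax ks (d / (1 - alpha))
      + psi_inv mumax rhomax kv qmin d / (alpha * beta * gamma) < sin))
  /\
  (forall s e v q c,
     is_equilibrium sin gamma beta phimax ks rhomax kv qmin mumax alpha d
       s e v q c -> 0 < e -> 0 < c ->
     let sstar := phi_inv phimax ks (d / (1 - alpha)) in
     let vstar := psi_inv mumax rhomax kv qmin d in
     let qstar := mu_inv mumax qmin d in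
     let vinstar := alpha * beta * gamma * (sin - sstar) in
     s = sstar /\
     e = (1 - alpha) * gamma * (sin - sstar) /\
     v = vstar /\
     q = qstar /\
     c = (vinstar - vstar) / qstar).
Proof.
  pose proof (positive_equilibrium_values (sin := sin) (beta := beta)
    Hgamma Hphimax Hks Hrhomax Hkv Hqmin Hmumax Halpha Hd) as Hvalues.
  split.
  - rewrite (admissible_iff (sin := sin) (ks := ks) (kv := kv) (rhomax := rhomax)
      Hgamma Hbeta Halpha).
    split.
    + intros (s & e & v & q & c & Heq & He & Hc).
      exact (proj1 (Hvalues s e v q c Heq He Hc)).
    + intros Hadm.
      eexists _, _, _, _, _.
      exact (admissible_positive_equilibrium
        Hgamma Hbeta Hphimax Hks Hrhomax Hkv Hqmin Hmumax Halpha Hd Hadm).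
  - intros s e v q c Heq He Hc.
    exact (proj2 (Hvalues s e v q c Heq He Hc)).
Qed.
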